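(* With the notation below, for every nonzero triple labeling $J:\mathcal H_\kappa\to\mathscr T$, the set $J^{(1)}(V^{(3)})$, viewed as a subset of $O_m$ via $|ij\rangle\mapsto(i,j)$, is a valid set. Conversely, for every valid set $S\subseteq O_m$ there exists a nonzero triple labeling $J$ with $J^{(1)}(V^{(3)})=S$, and it is unique up to replacing $J$ by $J\circ\sigma$ for bijections $\sigma$ of $\mathcal H_\kappa$ satisfying $\sigma(V^{(k)})=V^{(k)}$ for $k=1,2,3$.
   Context: Let $m>1$ be odd, $\kappa=\frac{m^2-1}2$, $a=\frac{m+1}2$, $\bar i=m+1-i$. $O_m=([m]\times[m])\setminus\{(a,a)\}$; $\tau(i,j)=(j,\bar i)$ and $\iota(S)=O_m\setminus S$; $S\subseteq O_m$ is valid if $|S|=\kappa$, $\tau(S)=\iota(S)$, and $|\{j:(i,j)\in S\}|=|i-\bar i|$ for all $i\in[m]$. $\mathcal H_\kappa$ is the set of $(i,j,k)\in[\kappa+1]^3$ with at least two coordinates equal to $1$, fixed with a total order; $y^0=(1,1,1)$, $V^{(1)}=\{(i,1,1):i\ge2\}$, $V^{(2)}=\{(1,j,1):j\ge2\}$, $V^{(3)}=\{(1,1,k):k\ge2\}$. Its $k$-slices form the set partition $E^{(k)}$ consisting of $e^{(k)}=V^{(k+1)}\cup V^{(k+2)}\cup\{y^0\}$ (indices mod 3, $|e^{(k)}|=m^2$) and the singletons $\{y\}$, $y\in V^{(k)}$. Let $|ij\rangle$ ($i,j\in[m]$) be the standard basis of $\mathbb C^{m\times m}$ and $|1\rangle,\dots,|m^2\rangle$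 the standard basis of $\mathbb C^{m^2}$. Let $\mathscr T=\{(|ij\rangle,|jl\rangle,|li\rangle):i,j,l\in[m]\}$; a triple labeling is a map $J=(J^{(1)},J^{(2)},J^{(3)}):\mathcal H_\kappa\to\mathscr T$. Let $\Gamma=\mathbb C[X^{(k)}_i:k\in[3],i\in[m]]$, fix a bijection $\varphi:O_m\to\{2,\dots,m^2\}$, and define $\Gamma$-linear maps $A^{(k)}:\Gamma^{m\times m}\to\Gamma^{m^2}$ by $A^{(k)}|aa\rangle=X^{(k)}_a|1\rangle$; $A^{(k)}|i\bar i\rangle=|\varphi(i,\bar i)\rangle+X^{(k)}_i|1\rangle$ for $i\neq a$; $A^{(k)}|ij\rangle=|\varphi(i,j)\rangle$ for $j\neq\bar i$. For a labeling $J$ let $AJ$ be the labeling $y\mapsto(A^{(1)}J^{(1)}(y),A^{(2)}J^{(2)}(y),A^{(3)}J^{(3)}(y))$ and $\mathrm{eval}_{\mathcal H_\kappa}(AJ)=\prod_{k=1}^3\prod_{e\in E^{(k)}}\det(AJ)^{(k)}|_e\in\Gamma$, where $\det L|_e$ is the determinant of the $|e|\times|e|$ matrix whose columns are $L(s)$, $s\in e$ in the fixed order, truncated to their first $|e|$ coordinates. Let $\mathcal X=\prod_{k=1}^3X^{(k)}_a\prod_{i=1}^m(X^{(k)}_i)^{|i-\bar i|}$. A triple labeling $J$ is nonzero if the coefficient of the monomial $\mathcal X$ in $\mathrm{eval}_{\mathcal H_\kappa}(AJ)$ is nonzero. *)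

From HB Require Import structures.
From mathcomp Require Import all_boot all_order all_algebra all_fingroup all_field.
Set Implicit Arguments. Unset Strict Implicit. Unset Printing Implicit Defensive.
Import GRing.Theory.
Local Open Scope ring_scope.

(* C is modelled by algC.  C[x_0,...,x_(n-1)] is the iterated polynomial ring
   MP n = (...(C[x_0])[x_1]...)[x_(n-1)]. *)
Fixpoint MP (n : nat) : comNzRingType :=
  match n with 0 => algC | n'.+1 => {poly MP n'} end.

(* the variable x_v in MP n (0 if v >= n) *)
Fixpoint mvar (n v : nat) {struct n} : MP n :=
  match n return MP n with
  | 0 => 0
  | n'.+1 => if v == n' then 'X else (mvar n' v)%:P
  end.

(* coefficient of the monomial prod_v x_v^(e v) *)
Fixpoint mcoef (n : nat) (e : nat -> nat) {struct n} : MP n -> algC :=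
  match n return MP n -> algC with
  | 0 => fun p => p
  | n'.+1 => fun p => mcoef e (p`_(e n'))
  end.

(* Gamma = C[X^(k)_i : k in [3], i in [m]]; X^(k)_i is variable number k*m+i
   (0-based k and i). *)
Definition Gamma (m : nat) := MP (3 * m).
Definition Xv (m : nat) (k : 'I_3) (i : 'I_m) : Gamma m := mvar (3 * m) (k * m + i).

(* i-bar = m+1-i becomes rev_ord i (value m-1-i); the centre a=(m+1)/2 becomes m./2 *)
Definition Om (m : nat) : {set 'I_m * 'I_m} :=
  [set p | (val p.1 != m./2) || (val p.2 != m./2)].

Definition tau (m : nat) (p : 'I_m * 'I_m) : 'I_m * 'I_m := (p.2, rev_ord p.1).

Definition kap (m : nat) : nat := (m ^ 2).-1./2.

Definition valid (m : nat) (S : {set 'I_m * 'I_m}) : bool :=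
  [&& S \subset Om m, #|S| == kap m, [set tau p | p in S] == Om m :\: S &
      [forall i : 'I_m, #|[set j : 'I_m | (i, j) \in S]| == `|i - rev_ord i|%N]].

(* (i,j,k) in [kappa+1]^3, 0-based, with at least two coordinates equal to 0
   (i.e. equal to 1 in the paper's 1-based convention). *)
Definition inH (K : nat) (t : 'I_K.+1 * 'I_K.+1 * 'I_K.+1) : bool :=
  (2 <= count (fun x : nat => x == 0) [:: val t.1.1; val t.1.2; val t.2])%N.

Definition H (m : nat) := {t : 'I_(kap m).+1 * 'I_(kap m).+1 * 'I_(kap m).+1 | inH t}.

Definition y0 (m : nat) : H m := exist _ (ord0, ord0, ord0) isT.

Definition coord3 (K : nat) (t : 'I_K * 'I_K * 'I_K) (k : 'I_3) : 'I_K :=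
  match val k with 0 => t.1.1 | 1 => t.1.2 | _ => t.2 end.

(* V k = V^(k+1) of the paper: the elements whose k-th coordinate is not 1 *)
Definition V (m : nat) (k : 'I_3) : {set H m} :=
  [set y : H m | val (coord3 (val y) k) != 0%N].

Definition ebig (m : nat) (k : 'I_3) : {set H m} :=
  V m (ordS k) :|: V m (ordS (ordS k)) :|: [set y0 m].

Definition Eslice (m : nat) (k : 'I_3) : {set {set H m}} :=
  ebig m k |: [set [set y] | y in V m k].

(* A triple (|ij>,|jl>,|li>) of T is encoded by (i,j,l); this encoding is a
   bijection [m]^3 -> T.  A triple labeling is J : H m -> 'I_m*'I_m*'I_m. *)
Definition labeling (m : nat) := H m -> 'I_m * 'I_m * 'I_m.

(* J^(k+1)(y) as a pair (row,col) of the basis vector |row col> *)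
Definition Jc (m : nat) (k : 'I_3) (J : labeling m) (y : H m) : 'I_m * 'I_m :=
  let t := J y in
  match val k with
  | 0 => (t.1.1, t.1.2)
  | 1 => (t.1.2, t.2)
  | _ => (t.2, t.1.1)
  end.

(* A^(k+1)|ij> in Gamma^(m^2); coordinate r (0-based, so r = 0 is |1>). *)
Definition Acol (m : nat) (phi : 'I_m * 'I_m -> 'I_(m ^ 2)) (k : 'I_3)
    (p : 'I_m * 'I_m) (r : nat) : Gamma m :=
  let: (i, j) := p in
  if (val i == m./2) && (val j == m./2) then
    (if r == 0%N then Xv k i else 0)
  else if j == rev_ord i then
    (if r == val (phi p) then 1 else 0) + (if r == 0%N then Xv k i else 0)
  else (if r == val (phi p) then 1 else 0).

(* det L|_e : columns L(s), s in e in the fixed total order (given by the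
   injective rank function rk), truncated to the first |e| coordinates. *)
Definition ordered (m : nat) (rk : H m -> nat) (e : {set H m}) : seq (H m) :=
  sort (fun x y => (rk x <= rk y)%N) (enum e).

Definition detRes (m : nat) (rk : H m -> nat) (L : H m -> nat -> Gamma m)
    (e : {set H m}) : Gamma m :=
  \det (\matrix_(r < #|e|, c < #|e|) L (nth (y0 m) (ordered rk e) c) r).

Definition evalH (m : nat) (phi : 'I_m * 'I_m -> 'I_(m ^ 2)) (rk : H m -> nat)
    (J : labeling m) : Gamma m :=
  \prod_(k < 3) \prod_(e in Eslice m k)
     detRes rk (fun y => Acol phi k (Jc k J y)) e.

(* exponent of variable number v = k*m+i in the monomial
   calX = prod_k X^(k)_a prod_i (X^(k)_i)^|i - ibar| *)
Definition calX_exp (m : nat) (v : nat) : nat :=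
  if (v < 3 * m)%N then
    let i := (v %% m)%N in ((i == m./2) + `|i - (m.-1 - i)%N|)%N
  else 0.

Definition nonzeroJ (m : nat) (phi : 'I_m * 'I_m -> 'I_(m ^ 2)) (rk : H m -> nat)
    (J : labeling m) : Prop :=
  mcoef (calX_exp m) (evalH phi rk J) != 0.

Definition J1V3 (m : nat) (J : labeling m) : {set 'I_m * 'I_m} :=
  [set Jc ord0 J y | y in V m (inord 2)].

From HB Require Import structures.
From mathcomp Require Import all_boot all_order all_algebra all_fingroup all_field.
From mathcomp Require Import zify.
From Stdlib Require Import FunctionalExtensionality.
Set Implicit Arguments. Unset Strict Implicit. Unset Printing Implicit Defensive.
Import GRing.Theory.

(* Every determinant occurring in eval(AJ) has a very rigid shape:
   a singleton {y} contributes the row-0 entry of A^(k)J^(k)(y), which is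
   X^(k)_i if J^(k)(y) = |i ibar> and 0 otherwise, and the big hyperedge e^(k)
   (of size m^2) contributes 0 if J^(k) repeats a label on it and +-X^(k)_a
   otherwise (after sorting the columns by the position of their unit entry
   the matrix is triangular).  Hence eval(AJ) is either 0 or a signed
   monomial, and J is nonzero iff it is "admissible": J^(k) is injective on
   e^(k), maps V k to the antidiagonal, and hits row i exactly |i - ibar|
   times from V k (nonzero_admissible).  The rest is combinatorics:
   - for admissible J, each e^(k) partitions [m] x [m] into the set
     Z k = J^(k)(V(k+2)), a tau-rotated copy of Z(k+2) and the centre label;
     chaining the three partitions shows all Z k coincide and form a valid set;
   - for a valid S, enumerating S gives an explicit admissible labeling Jdef
     with Z-set S, and every admissible J with Z-set S is Jdef composed with a
     leg-preserving permutation of the vertices. *)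

Section Monomials.
Local Open Scope ring_scope.

Fixpoint mon (n : nat) (f : nat -> nat) : MP n :=
  match n return MP n with
  | 0 => 1
  | n'.+1 => (mon n' f)%:P * 'X^(f n')
  end.

Lemma eq_mon n f g : (forall v, (v < n)%N -> f v = g v) -> mon n f = mon n g.
Proof.
elim: n => [//|n IH] Efg /=.
by rewrite (IH (fun v lt_v => Efg v (ltnW lt_v))) Efg.
Qed.

Lemma monD n f g : mon n f * mon n g = mon n (fun v => (f v + g v)%N).
Proof.
elim: n => [|n IH] /=; first by rewrite mulr1.
by rewrite -IH polyCM exprD mulrACA.
Qed.

Lemma mon0 n : mon n (fun _ => 0%N) = 1.
Proof. by elim: n => [//|n IH] /=; rewrite IH expr0 mulr1. Qed.

Lemma mvar_mon n v : (v < n)%N -> mvar n v = mon n (fun w => (w == v) : nat).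
Proof.
elim: n => [//|n IH] lt_vn /=.
have [<-|ne_nv] := eqVneq n v.
  rewrite expr1 (@eq_mon n _ (fun _ => 0%N)) ?mon0 ?mul1r //.
  by move=> w lt_w; rewrite (ltn_eqF lt_w).
rewrite IH ?expr0 ?mulr1 //.
by rewrite ltn_neqAle eq_sym ne_nv -ltnS.
Qed.

Lemma mcoef0 n e : mcoef e (0 : MP n) = 0.
Proof. by elim: n => [//|n IH] /=; rewrite coef0 IH. Qed.

Lemma mcoef_sign n e (b : nat) (p : MP n) :
  mcoef e ((-1) ^+ b * p) = (-1) ^+ b * mcoef e p.
Proof.
have mcoefN q : mcoef e (- q : MP n) = - mcoef e q.
  by elim: n q {p} => [//|n IH] q /=; rewrite coefN IH.
elim: b => [|b IH]; first by rewrite !expr0 !mul1r.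
by rewrite !exprS -!mulrA !mulN1r mcoefN IH.
Qed.

Lemma mcoef_mon n e f :
  mcoef e (mon n f) = if all (fun v => e v == f v) (iota 0 n) then 1 else 0.
Proof.
elim: n => [//|n IH].
rewrite -addn1 iotaD all_cat /= andbT addn1 /= coefCM coefXn.
case: (e n == f n); last by rewrite mulr0 mcoef0 andbF.
by rewrite mulr1 andbT IH.
Qed.

Definition signed_mon n (p : MP n) (f : nat -> nat) :=
  exists b : nat, p = (-1) ^+ b * mon n f.

Lemma signed_mon_ext n (p : MP n) f g :
  signed_mon p f -> (forall v, (v < n)%N -> f v = g v) -> signed_mon p g.
Proof. by move=> [b ->] Efg; exists b; rewrite (eq_mon Efg). Qed.

Lemma signed_mon_mul n (p q : MP n) f g : signed_mon p f -> signed_mon q g ->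
  signed_mon (p * q) (fun v => (f v + g v)%N).
Proof. by move=> [b1 ->] [b2 ->]; exists (b1 + b2)%N; rewrite exprD mulrACA monD. Qed.

Lemma signed_mon_prod n (I : Type) (r : seq I) (P : pred I) (p : I -> MP n)
    (f : I -> nat -> nat) :
  (forall i, P i -> signed_mon (p i) (f i)) ->
  signed_mon (\prod_(i <- r | P i) p i) (fun v => \sum_(i <- r | P i) f i v)%N.
Proof.
move=> mon_p; elim: r => [|x r IH].
  exists 0%N; rewrite big_nil expr0 mul1r -(mon0 n).
  by apply: eq_mon => v _; rewrite big_nil.
rewrite big_cons; case Px: (P x).
  by apply: signed_mon_ext (signed_mon_mul (mon_p _ Px) IH) _ => v _; rewrite big_cons Px.
by apply: signed_mon_ext IH _ => v _; rewrite big_cons Px.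
Qed.

Lemma signed_mon_coef n (p : MP n) f e : signed_mon p f ->
  (mcoef e p != 0) = all (fun v => e v == f v) (iota 0 n).
Proof.
move=> [b ->]; rewrite mcoef_sign mcoef_mon.
by case: all; rewrite ?mulr1 ?mulr0 ?signr_eq0 ?eqxx.
Qed.

End Monomials.
Lemma ordS3 (k : 'I_3) : ordS (ordS (ordS k)) = k.
Proof. by apply/val_inj; case: k => [[|[|[|]]] ?]. Qed.

Lemma ordS_neq (k : 'I_3) :
  [/\ ordS k != k, ordS (ordS k) != k & ordS k != ordS (ordS k)].
Proof. by case: k => [[|[|[|]]] ?]. Qed.

Lemma ordS_cases (k k' : 'I_3) : [\/ k' = k, k' = ordS k | k' = ordS (ordS k)].
Proof.
case: k => [[|[|[|//]]] ?]; case: k' => [[|[|[|//]]] ?];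
  by [constructor 1; apply/val_inj | constructor 2; apply/val_inj
     | constructor 3; apply/val_inj].
Qed.

(* [mk3 k a b c] is the triple with coordinates a, b, c in positions k, k+1, k+2;
   it lets us treat the three slices uniformly. *)
Section Triples.
Variable K : nat.

Definition mk3 (k : 'I_3) (a b c : 'I_K) : 'I_K * 'I_K * 'I_K :=
  match val k with 0 => ((a, b), c) | 1 => ((c, a), b) | _ => ((b, c), a) end.

Lemma coord3_mk3 k a b c :
  [/\ coord3 (mk3 k a b c) k = a, coord3 (mk3 k a b c) (ordS k) = b
    & coord3 (mk3 k a b c) (ordS (ordS k)) = c].
Proof. by case: k => [[|[|[|]]] ?]. Qed.

Lemma triple_ext (t t' : 'I_K * 'I_K * 'I_K) :
  (forall k, coord3 t k = coord3 t' k) -> t = t'.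
Proof.
case: t t' => [[x1 x2] x3] [[z1 z2] z3] E.
have := E (@Ordinal 3 0 isT); have := E (@Ordinal 3 1 isT).
by have := E (@Ordinal 3 2 isT); rewrite /coord3 /= => -> -> ->.
Qed.

Lemma mk3_coord3 k t :
  t = mk3 k (coord3 t k) (coord3 t (ordS k)) (coord3 t (ordS (ordS k))).
Proof.
apply: triple_ext => k'; have [E1 E2 E3] := coord3_mk3 k (coord3 t k)
  (coord3 t (ordS k)) (coord3 t (ordS (ordS k))).
by case: (ordS_cases k k') => Ek'; rewrite Ek' ?E1 ?E2 ?E3.
Qed.

End Triples.

Lemma JcE m k (J : labeling m) y :
  Jc k J y = (coord3 (J y) k, coord3 (J y) (ordS k)).
Proof. by case: k => [[|[|[|]]] ?]. Qed.

(* The hypergraph H_kappa: a centre y0 and three disjoint "legs" V k, each of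
   size kappa; the hyperedge e^(k) of slice k has m^2 vertices. *)
Section Hypergraph.
Variable m : nat.
Local Notation K := (kap m).

Definition cd (k : 'I_3) (y : H m) : 'I_K.+1 := coord3 (val y) k.

Lemma inV k y : (y \in V m k) = (val (cd k y) != 0%N).
Proof. by rewrite inE. Qed.

Lemma V_disj k k' y : y \in V m k -> y \in V m k' -> k = k'.
Proof.
rewrite !inV /cd; case: y => [[[x1 x2] x3] inH_y] /=; move: inH_y; rewrite /inH /=.
case: k => [[|[|[|//]]] ?]; case: k' => [[|[|[|//]]] ?] //= cnt_y;
  try (by move=> *; apply/val_inj); move: cnt_y; do 3 (case: eqP => //).
Qed.

Lemma V_mem k k' y : y \in V m k -> (y \in V m k') = (k' == k).
Proof.
move=> Vy; apply/idP/eqP => [Vy'|->//]; exact: V_disj Vy' Vy.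
Qed.

Lemma cd_eq0 k k' y : y \in V m k -> k' != k -> val (cd k' y) = 0%N.
Proof. by move=> Vy; rewrite -(V_mem k' Vy) inV; move/negbNE/eqP. Qed.

Lemma y0_notin k : y0 m \notin V m k.
Proof. by rewrite inV /cd; case: k => [[|[|[|]]] ?]. Qed.

Lemma H_ext (y y' : H m) : (forall k, cd k y = cd k y') -> y = y'.
Proof. by move=> E; apply/val_inj/triple_ext. Qed.

Lemma V_cd_inj k : {in V m k &, injective (cd k)}.
Proof.
move=> y y' Vy Vy' E; apply: H_ext => k'.
have [-> //|ne_k] := eqVneq k' k.
by apply/val_inj; rewrite (cd_eq0 Vy ne_k) (cd_eq0 Vy' ne_k).
Qed.

Variant block_spec (y : H m) : option 'I_3 -> Prop :=
  | BlockCentre of y = y0 m : block_spec y None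
  | BlockLeg k of y \in V m k : block_spec y (Some k).

Lemma blockP y : block_spec y [pick k | y \in V m k].
Proof.
case: pickP => [k Vy|notV]; constructor => //.
apply: H_ext => k; apply/val_inj; have := notV k.
by rewrite inV /= => /negbFE/eqP ->; case: k => [[|[|[|]]] ?].
Qed.

Lemma pick_V k y : y \in V m k -> [pick k' | y \in V m k'] = Some k.
Proof.
move=> Vy; case: blockP => [E|k' Vy']; last by rewrite (V_disj Vy' Vy).
by move: Vy; rewrite E (negbTE (y0_notin _)).
Qed.

Lemma pick_y0 : [pick k | y0 m \in V m k] = None.
Proof. by case: (pickP (fun k => y0 m \in V m k)) => // k; rewrite (negbTE (y0_notin k)). Qed.

Definition mkV (k : 'I_3) (j : 'I_K.+1) : H m.
Proof.
exists (mk3 k j ord0 ord0); rewrite /inH.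
by case: k => [[|[|[|//]]] ?] /=; case: (val j == 0%N).
Defined.

Lemma cd_mkV k j : cd k (mkV k j) = j.
Proof. by case: (coord3_mk3 k j ord0 ord0). Qed.

Lemma mkV_in k j : val j != 0%N -> mkV k j \in V m k.
Proof. by rewrite inV cd_mkV. Qed.

Lemma card_V k : #|V m k| = K.
Proof.
rewrite -(card_in_imset (@V_cd_inj k)).
have -> : [set cd k y | y in V m k] = [set~ ord0].
  apply/setP => j; rewrite !inE; apply/imsetP/idP => [[y Vy ->]|ne_j0].
    by rewrite inV in Vy; apply: contra Vy => /eqP ->.
  by exists (mkV k j); rewrite ?cd_mkV // mkV_in //; apply: contra ne_j0 => /eqP E; apply/eqP/val_inj.
by rewrite cardsC1 card_ord.
Qed.

Lemma in_ebig k y : (y \in ebig m k) =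
  [|| y \in V m (ordS k), y \in V m (ordS (ordS k)) | y == y0 m].
Proof. by rewrite !inE orbA. Qed.

Lemma ebig_notV k y : (y \in ebig m k) = (y \notin V m k).
Proof.
rewrite in_ebig; case: (blockP y) => [->|k' Vy]; first by rewrite eqxx !orbT y0_notin.
have -> : (y == y0 m) = false by apply: contraTF Vy => /eqP ->; rewrite y0_notin.
rewrite !(V_mem _ Vy) orbF; have [ne1 ne2 _] := ordS_neq k.
by case: (ordS_cases k k') => ->;
  rewrite ?eqxx ?orbT /= ?(negbTE ne1) ?(negbTE ne2) // eq_sym ?ne1 ?ne2.
Qed.

(* Any two vertices avoid a common leg, i.e. lie on a common hyperedge e^(k). *)
Lemma common_ebig y1 y2 : exists k, (y1 \in ebig m k) && (y2 \in ebig m k).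
Proof.
have off (k' : 'I_3) : exists k, k != k' by exists (ordS k'); have [] := ordS_neq k'.
have off2 (k1 k2 : 'I_3) : exists k, (k != k1) && (k != k2).
  have [ne1 ne2 ne3] := ordS_neq k1.
  have [<-|ne] := eqVneq (ordS k1) k2; last by exists (ordS k1); rewrite ne1.
  by exists (ordS (ordS k1)); rewrite ne2 eq_sym.
suff [k ?] : exists k, (y1 \notin V m k) && (y2 \notin V m k).
  by exists k; rewrite !ebig_notV.
case: (blockP y1) => [->|k1 V1]; case: (blockP y2) => [->|k2 V2].
- by exists ord0; rewrite y0_notin.
- by have [k ne] := off k2; exists k; rewrite y0_notin (V_mem _ V2) ne.
- by have [k ne] := off k1; exists k; rewrite y0_notin (V_mem _ V1) ne.
- by have [k /andP [ne1 ne2]] := off2 k1 k2; exists k; rewrite (V_mem _ V1) (V_mem _ V2) ne1 ne2.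
Qed.

(* From now on m > 1 is odd, so that kappa = (m^2 - 1)/2 and a is the centre. *)
Hypothesis m_gt1 : (1 < m)%N.
Hypothesis m_odd : odd m.

Lemma kap_double : (K + K).+1 = m ^ 2.
Proof.
have : odd (m ^ 2) by rewrite oddX m_odd orbT.
rewrite /kap; have : (0 < m ^ 2)%N by rewrite expn_gt0; case: m m_gt1.
case: (m ^ 2) => [//|N] _ /= odd_N.
by have := odd_double_half N; rewrite (negbTE odd_N) -muln2 add0n; lia.
Qed.

Lemma card_ebig k : #|ebig m k| = m ^ 2.
Proof.
rewrite -kap_double /ebig cardsU cardsU !card_V cards1.
have [_ _ ne_k] := ordS_neq k.
have -> : V m (ordS k) :&: V m (ordS (ordS k)) = set0.
  apply/setP => y; rewrite inE in_set0; apply/negbTE/andP => [[V1 V2]].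
  by move/eqP: ne_k; apply; exact: V_disj V1 V2.
have -> : (V m (ordS k) :|: V m (ordS (ordS k))) :&: [set y0 m] = set0.
  apply/setP => y; rewrite in_setI in_set1 in_set0.
  apply/negbTE/andP => [[V12 /eqP Ey]].
  by move: V12; rewrite Ey in_setU !(negbTE (y0_notin _)).
by rewrite !cards0 !subn0 addn1.
Qed.

Lemma half_ltm : (m./2 < m)%N.
Proof. by have := odd_double_half m; rewrite m_odd -muln2; lia. Qed.

Definition ca : 'I_m := Ordinal half_ltm.
Definition cc : 'I_m * 'I_m := (ca, ca).

Lemma rev_ca : rev_ord ca = ca.
Proof. by apply/val_inj => /=; have := odd_double_half m; rewrite m_odd -muln2; lia. Qed.

Lemma rev_eq_ca (i : 'I_m) : (rev_ord i == ca) = (i == ca).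
Proof. by rewrite -{1}rev_ca (inj_eq rev_ord_inj). Qed.

Lemma in_Om (p : 'I_m * 'I_m) : (p \in Om m) = (p != cc).
Proof.
rewrite inE; case: p => i j /=; rewrite /cc xpair_eqE -!(inj_eq val_inj) /=.
by rewrite negb_and.
Qed.

(* p = (i, ibar) lies on the antidiagonal: only then does A^(k)|p> involve X. *)
Definition adg (p : 'I_m * 'I_m) : bool := p.2 == rev_ord p.1.

Section Determinants.
Variable phi : 'I_m * 'I_m -> 'I_(m ^ 2).
Hypothesis phi_inj : {in Om m &, injective phi}.
Hypothesis phi_ne1 : forall p, p \in Om m -> val (phi p) != 0%N.

Local Open Scope ring_scope.

Lemma Acol_val k p (r : nat) :
  Acol phi k p r = (if p == cc then 0 else (r == val (phi p))%:R)
                   + (if (r == 0%N) && adg p then Xv k p.1 else 0).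
Proof.
case: p => i j; rewrite /Acol /adg /cc /=.
have -> : (val i == m./2) && (val j == m./2) = ((i, j) == (ca, ca)).
  by rewrite xpair_eqE -!(inj_eq val_inj).
case: eqP => [[-> ->]|_]; first by rewrite rev_ca eqxx andbT add0r.
by case: eqP => _; case: eqP => _ //=; rewrite ?andbT ?andbF ?addr0.
Qed.

Lemma Acol0 k p : Acol phi k p 0 = if adg p then Xv k p.1 else 0.
Proof.
rewrite Acol_val eqxx /=; have [->|ne_p] := eqVneq p cc; first by rewrite add0r.
by have := phi_ne1 (p := p); rewrite in_Om => /(_ ne_p); rewrite eq_sym => /negbTE ->; rewrite add0r.
Qed.

Lemma det_noninj N k (g : 'I_N -> 'I_m * 'I_m) :
  ~~ injectiveb g -> \det (\matrix_(r < N, c < N) Acol phi k (g c) r) = 0.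
Proof.
move=> /injectivePn [c1 [c2 ne_c Eg]].
by rewrite -det_tr; apply: (determinant_alternate ne_c) => r; rewrite !mxE Eg.
Qed.

Lemma m2_gt0 : (0 < m ^ 2)%N.
Proof. by rewrite expn_gt0; case: m m_gt1. Qed.

Definition o0 : 'I_(m ^ 2) := Ordinal m2_gt0.

(* The row carrying the unit entry of A^(k)|p>, extended by 0 at the centre;
   it is a bijection [m] x [m] -> [m^2]. *)
Definition pivot (p : 'I_m * 'I_m) : 'I_(m ^ 2) := if p == cc then o0 else phi p.

Lemma pivot_inj : injective pivot.
Proof.
have phi_o0 q : q != cc -> phi q != o0.
  move=> ne_q; have := phi_ne1 (p := q); rewrite in_Om => /(_ ne_q).
  by apply: contraNneq => ->.
move=> p q; rewrite /pivot.
have [->|ne_p] := eqVneq p cc; have [->|ne_q] := eqVneq q cc => // E.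
- by move: (phi_o0 _ ne_q); rewrite -E eqxx.
- by move: (phi_o0 _ ne_p); rewrite E eqxx.
- by apply: phi_inj E; rewrite in_Om.
Qed.

(* With columns ordered by pivot, the matrix is upper triangular with diagonal
   X^(k)_a, 1, ..., 1. *)
Lemma det_sorted k (h : 'I_(m ^ 2) -> 'I_m * 'I_m) :
  (forall t, pivot (h t) = t) ->
  \det (\matrix_(r < m ^ 2, c < m ^ 2) Acol phi k (h c) r) = Xv k ca.
Proof.
move=> hK; have off_diag (r t : 'I_(m ^ 2)) : r != t -> r != o0 ->
    Acol phi k (h t) r = 0.
  move=> ne_rt ne_r0; rewrite Acol_val.
  have -> : (val r == 0%N) = false by apply: contraNF ne_r0 => /eqP r0; apply/eqP/val_inj.
  rewrite /= addr0; have := hK t; rewrite /pivot; case: eqP => // _ Et.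
  by rewrite Et (inj_eq val_inj) (negbTE ne_rt).
rewrite -det_tr det_trig; last first.
  apply/is_trig_mxP => t r lt_tr; rewrite !mxE off_diag //.
    by rewrite neq_ltn lt_tr orbT.
  by apply: contraTneq lt_tr => ->.
rewrite (bigD1 o0) //= big1 ?mulr1 => [|t ne_t0].
  rewrite !mxE Acol_val; have := hK o0; rewrite /pivot.
  case: eqP => [->|ne_h E0]; first by rewrite add0r eqxx /adg /cc /= rev_ca eqxx.
  by have := phi_ne1 (p := h o0); rewrite in_Om E0 => /(_ (introN eqP ne_h)).
rewrite !mxE Acol_val; have := hK t; rewrite /pivot.
case: eqP => [_ E0|_ ->]; first by move: ne_t0; rewrite E0 eqxx.
rewrite eqxx; have -> : (val t == 0%N) = false.
  by apply: contraNF ne_t0 => /eqP t0; apply/eqP/val_inj.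
by rewrite addr0.
Qed.

Lemma det_inj k (g : 'I_(m ^ 2) -> 'I_m * 'I_m) : injective g ->
  exists b : nat,
    \det (\matrix_(r < m ^ 2, c < m ^ 2) Acol phi k (g c) r) = (-1) ^+ b * Xv k ca.
Proof.
move=> g_inj; have pg_inj : injective (pivot \o g) by apply: inj_comp pivot_inj _.
pose s : 'S_(m ^ 2) := perm pg_inj.
pose E := \matrix_(r < m ^ 2, t < m ^ 2) Acol phi k (g ((s^-1)%g t)) r.
have -> : \matrix_(r < m ^ 2, c < m ^ 2) Acol phi k (g c) r = col_perm s E.
  by apply/matrixP => r c; rewrite !mxE permK.
rewrite col_permE det_mulmx det_perm mulrC; exists (odd_perm (s^-1)%g).
congr (_ * _); apply: det_sorted => t.
by have := permKV s t; rewrite permE.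
Qed.

Variable rk : H m -> nat.

Lemma ordered_size (e : {set H m}) : size (ordered rk e) = #|e|.
Proof. by rewrite /ordered size_sort cardE. Qed.

Lemma ordered_mem (e : {set H m}) y : (y \in ordered rk e) = (y \in e).
Proof. by rewrite /ordered (perm_mem (permEl (perm_sort _ _))) mem_enum. Qed.

Lemma ordered_uniq (e : {set H m}) : uniq (ordered rk e).
Proof. by rewrite /ordered (perm_uniq (permEl (perm_sort _ _))) enum_uniq. Qed.

Lemma detRes_single (L : H m -> nat -> Gamma m) y : detRes rk L [set y] = L y 0%N.
Proof.
rewrite /detRes; move: (ordered_size [set y]) (ordered_mem [set y]).
rewrite cards1; case: (ordered rk _) => [|z [|//]] //= _ mem_z.
have := mem_z z; rewrite mem_seq1 eqxx inE => /esym/eqP ->.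
by rewrite det_mx11 mxE.
Qed.

Lemma detRes_inj k (e : {set H m}) (lab : H m -> 'I_m * 'I_m) :
  #|e| = (m ^ 2)%N -> {in e &, injective lab} ->
  exists b : nat, detRes rk (fun y => Acol phi k (lab y)) e = (-1) ^+ b * Xv k ca.
Proof.
rewrite /detRes => card_e lab_inj; move: (ordered_size e) (ordered_mem e) (ordered_uniq e).
move: (ordered rk e); rewrite card_e => s size_s mem_s uniq_s.
apply: (@det_inj k (fun c : 'I_(m ^ 2) => lab (nth (y0 m) s c))) => c1 c2.
have in_e (c : 'I_(m ^ 2)) : nth (y0 m) s c \in e by rewrite -mem_s mem_nth ?size_s.
move=> /(lab_inj _ _ (in_e c1) (in_e c2)) /eqP.
by rewrite nth_uniq ?size_s // => /eqP/val_inj.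
Qed.

Lemma detRes_ne0 k (lab : H m -> 'I_m * 'I_m) (e : {set H m}) :
  detRes rk (fun y => Acol phi k (lab y)) e != 0 -> {in e &, injective lab}.
Proof.
move=> det_ne0 y1 y2 e_y1 e_y2 Elab; apply/eqP; apply: contraR det_ne0 => ne_y.
rewrite /detRes; apply/eqP/det_noninj/injectivePn.
have idx y : y \in e -> (index y (ordered rk e) < #|e|)%N.
  by move=> e_y; rewrite -ordered_size index_mem ordered_mem.
exists (Ordinal (idx _ e_y1)), (Ordinal (idx _ e_y2)).
  apply: contra ne_y => /eqP [E].
  by have := congr1 (nth (y0 m) (ordered rk e)) E; rewrite !nth_index ?ordered_mem // => ->.
by rewrite !(@nth_index _ (y0 m)) ?ordered_mem.
Qed.

(* The singleton hyperedges contribute the row-0 entries of A^(k). *)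
Definition single_det k (p : 'I_m * 'I_m) : Gamma m := if adg p then Xv k p.1 else 0.

Lemma evalH_factor J : evalH phi rk J =
  \prod_(k < 3) (detRes rk (fun y => Acol phi k (Jc k J y)) (ebig m k) *
                 \prod_(y in V m k) single_det k (Jc k J y)).
Proof.
apply: eq_bigr => k _; rewrite /Eslice big_setU1 /=; last first.
  apply/imsetP => [[y _ E]]; have := card_ebig k; rewrite E cards1.
  by rewrite -mulnn; nia.
congr (_ * _); rewrite big_imset /=; last by move=> y1 y2 _ _; apply: set1_inj.
by apply: eq_bigr => y _; rewrite detRes_single Acol0.
Qed.

End Determinants.

Definition cnt (i : 'I_m) : nat := `|i - rev_ord i|%N.

(* The combinatorial content of "J is nonzero": J^(k) is injective on the big
   hyperedge e^(k), sends every vertex of the leg V k to the antidiagonal, and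
   row i is hit |i - ibar| times from V k. *)
Definition admissible (J : labeling m) : Prop :=
  [/\ forall k, {in ebig m k &, injective (Jc k J)},
      forall k y, y \in V m k -> adg (Jc k J y) &
      forall k (i : 'I_m), #|[set y in V m k | (Jc k J y).1 == i]| = cnt i].

(* For an admissible J, eval(AJ) is a signed monomial, whose exponent of
   X^(k)_i is [i = a] plus the number of y in V k with J^(k)(y) in row i;
   comparing it with calX characterises nonzero labelings. *)
Section NonzeroLabelings.
Variable phi : 'I_m * 'I_m -> 'I_(m ^ 2).
Hypothesis phi_inj : {in Om m &, injective phi}.
Hypothesis phi_ne1 : forall p, p \in Om m -> val (phi p) != 0%N.
Variable rk : H m -> nat.

Local Open Scope ring_scope.

Lemma km_lt (k : 'I_3) (i : 'I_m) : (k * m + i < 3 * m)%N.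
Proof. by have := ltn_ord k; have := ltn_ord i; nia. Qed.

Lemma eq_km (k k' i j : nat) : (i < m)%N -> (j < m)%N ->
  (k * m + i == k' * m + j)%N = (k == k') && (i == j).
Proof.
move=> lt_i lt_j; apply/eqP/andP => [E|[/eqP-> /eqP->]//].
have m_gt0 : (0 < m)%N by case: m m_gt1.
have := congr1 (divn^~ m) E; have := congr1 (modn^~ m) E.
by rewrite /= !divnMDl // !divn_small // !modnMDl !modn_small // !addn0 => -> ->.
Qed.

Lemma all_km (P : nat -> bool) :
  all P (iota 0 (3 * m)) <-> (forall (k : 'I_3) (i : 'I_m), P (k * m + i)%N).
Proof.
have m_gt0 : (0 < m)%N by case: m m_gt1.
split=> [/allP P_all k i|P_km]; first by apply: P_all; rewrite mem_iota add0n km_lt.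
apply/allP => v; rewrite mem_iota add0n => lt_v.
have lt_k : (v %/ m < 3)%N by rewrite ltn_divLR.
have lt_i : (v %% m < m)%N by rewrite ltn_pmod.
by rewrite (divn_eq v m); exact: (P_km (Ordinal lt_k) (Ordinal lt_i)).
Qed.

Lemma Xv_mon k (i : 'I_m) : Xv k i = mon (3 * m) (fun v => (v == k * m + i)%N : nat).
Proof. by rewrite /Xv mvar_mon // km_lt. Qed.

Lemma calX_km (k : 'I_3) (i : 'I_m) :
  calX_exp m (k * m + i) = ((i == ca) + cnt i)%N.
Proof.
rewrite /calX_exp km_lt modnMDl modn_small //; congr (_ + _)%N.
by rewrite /cnt /=; have -> : (m.-1 - i = m - i.+1)%N by lia.
Qed.

Definition exponent (J : labeling m) (v : nat) : nat :=
  \sum_(k < 3) ((v == k * m + ca) +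
                \sum_(y in V m k) (v == k * m + (Jc k J y).1))%N.

Lemma exponent_km J (k0 : 'I_3) (i0 : 'I_m) : exponent J (k0 * m + i0) =
  ((i0 == ca) + #|[set y in V m k0 | (Jc k0 J y).1 == i0]|)%N.
Proof.
have lt_a := half_ltm.
rewrite /exponent (bigD1 k0) //= [X in (_ + X)%N]big1 ?addn0 => [|k ne_k].
  rewrite eq_km // eqxx /=; congr (_ + _)%N.
  rewrite -sum1_card big_mkcond [RHS]big_mkcond /=; apply: eq_bigr => y _.
  rewrite eq_km ?ltn_ord // eqxx /= [in RHS]inE.
  by case: (y \in V m k0); rewrite //= eq_sym.
have ne_k' : (k0 == k :> nat) = false by apply/negbTE; rewrite eq_sym.
rewrite eq_km // ne_k' big1 // => y _.
by rewrite eq_km ?ltn_ord // ne_k'.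
Qed.

Lemma evalH_signed_mon J :
  (forall k, {in ebig m k &, injective (Jc k J)}) ->
  (forall k y, y \in V m k -> adg (Jc k J y)) ->
  signed_mon (evalH phi rk J) (exponent J).
Proof.
move=> J_inj J_adg; rewrite (evalH_factor phi_ne1).
apply: signed_mon_prod => k _; apply: signed_mon_mul.
  have [b ->] := detRes_inj phi_inj phi_ne1 rk k (card_ebig k) (J_inj k).
  by exists b; rewrite Xv_mon.
apply: signed_mon_prod => y Vy; exists 0%N.
by rewrite /single_det (J_adg k y Vy) Xv_mon expr0 mul1r.
Qed.

Lemma nonzero_admissible J : nonzeroJ phi rk J <-> admissible J.
Proof.
have coefE : (forall k, {in ebig m k &, injective (Jc k J)}) ->
    (forall k y, y \in V m k -> adg (Jc k J y)) ->
    (nonzeroJ phi rk J <-> forall k i, #|[set y in V m k | (Jc k J y).1 == i]| = cnt i).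
  move=> J_inj J_adg; rewrite /nonzeroJ (signed_mon_coef _ (evalH_signed_mon J_inj J_adg)) all_km.
  split=> E k i; last by rewrite calX_km exponent_km E.
  by have /eqP := E k i; rewrite calX_km exponent_km => /addnI.
split=> [nz_J|[J_inj J_adg J_cnt]]; last by apply/coefE.
have mul_ne0 (a b : Gamma m) : a * b != 0 -> a != 0 /\ b != 0.
  by move=> nz; split; apply: contraNneq nz => ->; rewrite ?mul0r ?mulr0.
have prod_ne0 (T : finType) (A : {pred T}) (F : T -> Gamma m) x :
    \prod_(y in A) F y != 0 -> x \in A -> F x != 0.
  by move=> nz x_A; rewrite (bigD1 x) //= in nz; case: (mul_ne0 _ _ nz).
have nz_k k : detRes rk (fun y => Acol phi k (Jc k J y)) (ebig m k) != 0 /\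
              \prod_(y in V m k) single_det k (Jc k J y) != 0.
  have nz_eval : evalH phi rk J != 0.
    by apply: contraNneq nz_J => ->; rewrite mcoef0 eqxx.
  rewrite (evalH_factor phi_ne1) in nz_eval.
  exact: mul_ne0 (prod_ne0 _ predT _ k nz_eval isT).
have J_inj k : {in ebig m k &, injective (Jc k J)}.
  exact: detRes_ne0 (nz_k k).1.
have J_adg k y : y \in V m k -> adg (Jc k J y).
  move=> Vy; have := prod_ne0 _ _ _ y (nz_k k).2 Vy.
  by rewrite /single_det; case: adg; rewrite ?eqxx.
by split=> //; apply/(coefE J_inj J_adg).
Qed.

End NonzeroLabelings.

(* The inverse of the rotation tau(i, j) = (j, ibar); tau has order 4. *)
Definition tau_inv (p : 'I_m * 'I_m) : 'I_m * 'I_m := (rev_ord p.2, p.1).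

Lemma tauK : cancel (@tau m) tau_inv.
Proof. by case=> i j; rewrite /tau_inv /tau /= rev_ordK. Qed.

Lemma tau_invK : cancel tau_inv (@tau m).
Proof. by case=> i j; rewrite /tau_inv /tau /= rev_ordK. Qed.

Lemma tau_inv3 p : tau_inv (tau_inv (tau_inv p)) = tau p.
Proof. by case: p => i j; rewrite /tau_inv /tau /= rev_ordK. Qed.

Lemma tau_cc p : (tau p == cc) = (p == cc).
Proof. by case: p => i j; rewrite /tau /cc /= !xpair_eqE rev_eq_ca andbC. Qed.

Lemma tau_inv_ccE : tau_inv cc = cc.
Proof. by rewrite /tau_inv /cc /= rev_ca. Qed.

Lemma tau_inv_cc p : (tau_inv p == cc) = (p == cc).
Proof. by rewrite -tau_cc tau_invK. Qed.

Lemma mem_tau_img (A : {set 'I_m * 'I_m}) x :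
  (x \in [set tau p | p in A]) = (tau_inv x \in A).
Proof. by rewrite -{1}[x]tau_invK mem_imset //; apply: can_inj tauK. Qed.

Lemma cnt_ca : cnt ca = 0%N.
Proof. by rewrite /cnt rev_ca subrr. Qed.

Lemma cnt_rev (i : 'I_m) : cnt (rev_ord i) = cnt i.
Proof. by rewrite /cnt rev_ordK distnC. Qed.

Lemma V_disjoint k k' : k != k' -> [disjoint V m k & V m k'].
Proof.
move=> ne_k; rewrite disjoint_subset; apply/subsetP => y Vy; apply/negP => /= Vy'.
by move: ne_k; rewrite (V_disj Vy Vy') eqxx.
Qed.

(* A labeling injective on a hyperedge A + B + {z} of size m^2 is a bijection
   onto [m] x [m], so the images of A, B and z partition [m] x [m]. *)
Lemma partition_image (f : H m -> 'I_m * 'I_m) (A B : {set H m}) (z : H m) :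
  {in A :|: B :|: [set z] &, injective f} -> #|A :|: B :|: [set z]| = (m ^ 2)%N ->
  [disjoint A & B] -> z \notin A -> z \notin B ->
  forall x, (x \in f @: A) = (x \notin f @: B) && (x != f z).
Proof.
set E := A :|: B :|: [set z] => f_inj card_E dis_AB zA zB x.
have : x \in f @: E.
  have -> : f @: E = setT; last by rewrite inE.
  apply/eqP; rewrite eqEcard subsetT cardsT card_prod !card_ord.
  by rewrite (card_in_imset f_inj) card_E mulnn leqnn.
case/imsetP => y E_y ->.
have mem_f (Z : {set H m}) : Z \subset E -> (f y \in f @: Z) = (y \in Z).
  move=> sZE; apply/imsetP/idP => [[y' Zy' Ey]|]; last by exists y.
  by rewrite (f_inj _ _ E_y (subsetP sZE _ Zy') Ey).
have sAE : A \subset E by apply/subsetP => w Aw; rewrite !inE Aw.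
have sBE : B \subset E by apply/subsetP => w Bw; rewrite !inE Bw orbT.
rewrite (mem_f _ sAE) (mem_f _ sBE).
have -> : (f y != f z) = (y != z).
  have Ez : z \in E by rewrite !inE eqxx orbT.
  by apply/idP/idP; [apply: contra_neq => -> | apply: contra_neq => /(f_inj _ _ E_y Ez)].
move: E_y; rewrite !inE -orbA => /or3P [Ay|By|/eqP ->].
- by rewrite Ay (disjointFr dis_AB Ay); apply/esym; apply: contraNneq zA => <-.
- by rewrite By (disjointFl dis_AB By).
- by rewrite (negbTE zA) eqxx andbF.
Qed.

(* Structure of an admissible labeling J.  Write J(y) = (t_0, t_1, t_2), so
   that J^(k)(y) = (t_k, t_(k+1)).  The sets Z k = J^(k)(V(k+2)) will turn out
   to be one and the same valid set. *)
Section AdmissibleLabeling.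
Variable J : labeling m.
Hypothesis J_adm : admissible J.

Lemma row_ne_ca k y : y \in V m k -> (Jc k J y).1 != ca.
Proof.
case: J_adm => _ _ J_cnt Vy; apply/negP => /eqP row_y.
have /eqP := J_cnt k ca; rewrite cnt_ca cards_eq0 => /eqP/setP/(_ y).
by rewrite in_set in_set0 row_y eqxx andbT Vy.
Qed.

Lemma coord_next k y : y \in V m k ->
  coord3 (J y) (ordS k) = rev_ord (coord3 (J y) k).
Proof. by case: J_adm => _ J_adg _ /(J_adg k); rewrite /adg JcE => /eqP. Qed.

Lemma Jc_tau k y : y \in V m (ordS (ordS k)) -> Jc (ordS k) J y = tau (Jc k J y).
Proof.
by move=> Vy; have := coord_next Vy; rewrite ordS3 !JcE /tau /= => ->; rewrite rev_ordK.
Qed.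

Definition Z (k : 'I_3) : {set 'I_m * 'I_m} := [set Jc k J y | y in V m (ordS (ordS k))].

Lemma cc_notin_Z k : cc \notin Z k.
Proof.
apply/imsetP => [[y Vy]]; rewrite JcE /cc => -[row_y _].
have := row_ne_ca Vy; rewrite JcE /=.
have := coord_next Vy; rewrite ordS3 -row_y => /(congr1 (@rev_ord m)).
by rewrite rev_ordK rev_ca => <-; rewrite eqxx.
Qed.

(* Partition of [m] x [m] by the hyperedge e^(k): Z k, tau(Z(k+2)) and the
   label of the centre. *)
Lemma Z_partition k x :
  (x \in Z k) = ~~ (tau_inv x \in Z (ordS (ordS k))) && (x != Jc k J (y0 m)).
Proof.
have ebigE : ebig m k = V m (ordS (ordS k)) :|: V m (ordS k) :|: [set y0 m].
  by rewrite /ebig (setUC (V m (ordS k))).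
have dis : [disjoint V m (ordS (ordS k)) & V m (ordS k)].
  by apply: V_disjoint; have [_ _] := ordS_neq k; rewrite eq_sym.
have [J_inj _ _] := J_adm; have := J_inj k; rewrite ebigE => Jk_inj.
rewrite /Z (partition_image Jk_inj _ dis) ?y0_notin -?ebigE ?card_ebig //.
rewrite ordS3 -mem_tau_img -imset_comp (@eq_in_imset _ _ (Jc k J) (@tau m \o Jc (ordS (ordS k)) J) (V m (ordS k))) //.
by move=> y Vy; rewrite /= -Jc_tau ordS3.
Qed.


(* An admissible labeling is injective: two vertices share a hyperedge. *)
Lemma admissible_inj : injective J.
Proof.
move=> y1 y2 EJ; have [k /andP [e1 e2]] := common_ebig y1 y2.
by have [J_inj _ _] := J_adm; apply: (J_inj k) => //; rewrite !JcE EJ.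
Qed.

Lemma Jc_centre k : Jc k J (y0 m) = cc.
Proof.
have := Z_partition k cc; rewrite (negbTE (cc_notin_Z k)).
by rewrite tau_inv_ccE (negbTE (cc_notin_Z _)) /= eq_sym => /esym/negbFE/eqP.
Qed.

(* Chaining the three partitions: Z k is exactly "half" of O_m ... *)
Lemma Z_antisym k x : (x \in Z k) = (x != cc) && (tau x \notin Z k).
Proof.
have [->|ne_x] := eqVneq x cc; first by rewrite (negbTE (cc_notin_Z k)).
rewrite Z_partition (Z_partition _ (tau_inv x)) (Z_partition _ (tau_inv _)).
by rewrite !ordS3 tau_inv3 !Jc_centre !tau_inv_cc ne_x !andbT negbK.
Qed.

Lemma Z_shift k : Z (ordS k) = Z k.
Proof.
apply/setP => x; have [->|ne_x] := eqVneq x cc.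
  by rewrite (negbTE (cc_notin_Z _)) (negbTE (cc_notin_Z _)).
by rewrite Z_partition ordS3 Jc_centre ne_x andbT (Z_antisym k (tau_inv x))
  tau_invK tau_inv_cc ne_x negbK.
Qed.

(* Row i of Z k has |i - ibar| elements, by the row condition on V(k+2). *)
Lemma Z_row k (i : 'I_m) : #|[set j | (i, j) \in Z k]| = cnt i.
Proof.
have [J_inj _ J_cnt] := J_adm.
have -> : [set j | (i, j) \in Z k] =
    [set (Jc k J y).2 | y in [set y in V m (ordS (ordS k)) | (Jc k J y).1 == i]].
  apply/setP => j; rewrite inE; apply/imsetP/imsetP => [[y Vy E]|[y]].
    exists y; last by rewrite -E.
    by rewrite in_set Vy -E /= eqxx.
  by rewrite in_set => /andP [Vy /eqP <-] ->; exists y => //; case: (Jc k J y).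
rewrite card_in_imset => [|y1 y2]; last first.
  rewrite in_set => /andP [V1 /eqP E1]; rewrite in_set => /andP [V2 /eqP E2] E.
  apply: (J_inj k); rewrite ?in_ebig ?V1 ?V2 ?orbT //.
  by move: E1 E2 E; case: (Jc k J y1) => a1 b1; case: (Jc k J y2) => a2 b2 /= -> -> ->.
rewrite -cnt_rev -(J_cnt (ordS (ordS k)) (rev_ord i)); apply: eq_card => y.
rewrite in_set [in RHS]in_set; case Vy: (y \in V m _) => //=.
have := coord_next Vy; rewrite ordS3 !JcE /= => ->.
by rewrite -[in LHS](rev_ordK i) (inj_eq rev_ord_inj).
Qed.

Lemma Z_valid k : valid (Z k).
Proof.
have [J_inj _ _] := J_adm.
apply/and4P; split.
- by apply/subsetP => x; rewrite in_Om Z_antisym => /andP [].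
- rewrite /Z card_in_imset ?card_V // => y1 y2 V1 V2.
  by apply: J_inj; rewrite in_ebig ?V1 ?V2 orbT.
- apply/eqP/setP => x; rewrite in_setD in_Om mem_tau_img Z_antisym.
  by rewrite tau_invK tau_inv_cc andbC.
- by apply/forallP => i; rewrite Z_row.
Qed.

End AdmissibleLabeling.

(* Conversely, a valid set S determines an admissible labeling: enumerate S
   as ell 1, ..., ell kappa and give the vertex j of leg k the triple whose
   slices k, k+1, k+2 are (ell_j.1 bar, ell_j.1), ell_j and tau(ell_j). *)
Section FromValidSet.
Variable S : {set 'I_m * 'I_m}.
Hypothesis S_valid : valid S.

Lemma cc_notin_S : cc \notin S.
Proof.
case/and4P: S_valid => /subsetP S_sub _ _ _.
by apply/negP => /S_sub; rewrite in_Om eqxx.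
Qed.

Lemma tau_notin_S p : p \in S -> tau p \notin S.
Proof.
case/and4P: S_valid => _ _ /eqP S_tau _ Sp.
by have := imset_f (@tau m) Sp; rewrite S_tau in_setD => /andP [].
Qed.

Lemma S_row i : #|[set j | (i, j) \in S]| = cnt i.
Proof. by case/and4P: S_valid => _ _ _ /forallP /(_ i) /eqP. Qed.

Lemma card_S : #|S| = kap m.
Proof. by case/and4P: S_valid => _ /eqP. Qed.

(* The j-th element of S (j = 1..kappa) and the index of p in S. *)
Definition ell (j : 'I_(kap m).+1) : 'I_m * 'I_m := nth cc (enum S) j.-1.
Definition slot (p : 'I_m * 'I_m) : 'I_(kap m).+1 := inord (index p (enum S)).+1.

Lemma slot_val p : p \in S -> val (slot p) = (index p (enum S)).+1.
Proof.
by move=> Sp; rewrite /slot /= inordK // ltnS -card_S cardE index_mem mem_enum.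
Qed.

Lemma ell_slot p : p \in S -> ell (slot p) = p.
Proof. by move=> Sp; rewrite /ell slot_val //= nth_index ?mem_enum. Qed.

Lemma ell_index (j : 'I_(kap m).+1) : val j != 0%N -> ((val j).-1 < size (enum S))%N.
Proof. by move=> ne_j; rewrite -cardE card_S -ltnS prednK ?lt0n //; apply: ltn_ord. Qed.

Lemma ell_in j : val j != 0%N -> ell j \in S.
Proof. by move=> ne_j; rewrite -mem_enum mem_nth // ell_index. Qed.

Lemma slot_ell j : val j != 0%N -> slot (ell j) = j.
Proof.
move=> ne_j; apply/val_inj; rewrite slot_val ?ell_in //.
by rewrite /ell index_uniq ?enum_uniq ?ell_index // prednK // lt0n.
Qed.

Definition label (k : 'I_3) (y : H m) : 'I_m * 'I_m := ell (cd k y).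
Definition vertex (k : 'I_3) (p : 'I_m * 'I_m) : H m := mkV k (slot p).

Lemma vertex_in k p : p \in S -> vertex k p \in V m k.
Proof. by move=> Sp; rewrite mkV_in // slot_val. Qed.

Lemma label_vertex k p : p \in S -> label k (vertex k p) = p.
Proof. by move=> Sp; rewrite /label cd_mkV ell_slot. Qed.

Lemma vertex_label k y : y \in V m k -> vertex k (label k y) = y.
Proof.
move=> Vy; have ne_cd : val (cd k y) != 0%N by rewrite -inV.
rewrite /vertex /label slot_ell //; apply: (V_cd_inj (mkV_in _ ne_cd) Vy).
by rewrite cd_mkV.
Qed.

Lemma label_in k y : y \in V m k -> label k y \in S.
Proof. by move=> Vy; apply: ell_in; rewrite -inV. Qed.

Definition Jdef : labeling m := fun y =>
  if [pick k | y \in V m k] is Some k then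
    let u := label k y in mk3 k (rev_ord u.1) u.1 u.2
  else mk3 ord0 ca ca ca.

Lemma Jdef_Jc k y : y \in V m k ->
  [/\ Jc k Jdef y = (rev_ord (label k y).1, (label k y).1),
      Jc (ordS k) Jdef y = label k y
    & Jc (ordS (ordS k)) Jdef y = tau (label k y)].
Proof.
move=> Vy; rewrite !JcE /Jdef (pick_V Vy) ordS3.
have [-> -> ->] := coord3_mk3 k (rev_ord (label k y).1) (label k y).1 (label k y).2.
by split=> //; case: (label k y).
Qed.

Lemma Jdef_centre k : Jc k Jdef (y0 m) = cc.
Proof.
by rewrite JcE /Jdef pick_y0; case: k => [[|[|[|]]] ?].
Qed.

(* J^(k) is injective on e^(k): S, tau(S) and cc are disjoint, so a label
   tells which part of e^(k) it comes from, and then which vertex. *)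
Lemma Jdef_inj k : {in ebig m k &, injective (Jc k Jdef)}.
Proof.
pose g x := if x \in S then vertex (ordS (ordS k)) x
            else if tau_inv x \in S then vertex (ordS k) (tau_inv x) else y0 m.
apply: (can_in_inj (g := g)) => y; rewrite ebig_notV /g.
case: (blockP y) => [->|k' Vy ne_k].
  by rewrite Jdef_centre (negbTE cc_notin_S) tau_inv_ccE (negbTE cc_notin_S).
have [] := Jdef_Jc Vy; case: (ordS_cases k k') => Ek'; move: Vy ne_k; rewrite Ek'.
- by move=> ->.
- move=> Vy _ _ _; rewrite ordS3 => ->.
  by rewrite (negbTE (tau_notin_S (label_in Vy))) tauK label_in // vertex_label.
- by move=> Vy _ _; rewrite ordS3 => -> _; rewrite label_in // vertex_label.
Qed.

(* Jdef satisfies the three conditions; the row count transports row ibar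
   of S along the bijection label k : V k -> S. *)
Lemma Jdef_admissible : admissible Jdef.
Proof.
split; first exact: Jdef_inj.
  by move=> k y Vy; have [-> _ _] := Jdef_Jc Vy; rewrite /adg /= rev_ordK.
move=> k i; rewrite -cnt_rev -S_row.
rewrite -(@card_in_imset _ _ (fun y => (label k y).2)) => [|y1 y2]; last first.
  rewrite in_set => /andP [V1 /eqP E1]; rewrite in_set => /andP [V2 /eqP E2] E.
  have [J1 _ _] := Jdef_Jc V1; have [J2 _ _] := Jdef_Jc V2.
  rewrite -(vertex_label V1) -(vertex_label V2); congr vertex.
  move: E1 E2 E; rewrite J1 J2 /=.
  case: (label k y1) => a1 b1; case: (label k y2) => a2 b2 /= E1 E2 ->.
  by congr pair; apply: rev_ord_inj; rewrite E1 E2.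
apply: eq_card => j; rewrite [RHS]inE; apply/imsetP/idP => [[y] | Sp].
  rewrite in_set => /andP [Vy]; have [-> _ _] := Jdef_Jc Vy.
  by rewrite /= => /eqP <- ->; rewrite rev_ordK -surjective_pairing label_in.
exists (vertex k (rev_ord i, j)); last by rewrite label_vertex.
have Vv := vertex_in k Sp; rewrite in_set Vv; have [-> _ _] := Jdef_Jc Vv.
by rewrite label_vertex //= rev_ordK.
Qed.

Lemma Z_Jdef k : Z Jdef k = S.
Proof.
apply/setP => p; apply/imsetP/idP => [[y Vy ->]|Sp].
  by have [_ + _] := Jdef_Jc Vy; rewrite ordS3 => ->; apply: label_in.
have Vv := vertex_in (ordS (ordS k)) Sp; exists (vertex (ordS (ordS k)) p) => //.
by have [_ + _] := Jdef_Jc Vv; rewrite ordS3 label_vertex // => ->.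
Qed.

(* Any admissible J with Z-set S is Jdef up to a leg-preserving permutation:
   J(y) is recovered from the S-element J^(k+1)(y) carried by y in V k. *)
Lemma Jdef_unique J : admissible J -> Z J ord0 = S ->
  exists sigma : {perm H m},
    (forall k, sigma @: V m k = V m k) /\ J = (fun y => Jdef (sigma y)).
Proof.
move=> J_adm ZJ.
have JS k y : y \in V m k -> Jc (ordS k) J y \in S.
  move=> Vy; have <- : Z J (ordS k) = S.
    by case: (ordS_cases ord0 (ordS k)) => ->; rewrite ?Z_shift.
  by apply: imset_f; rewrite ordS3.
pose sg y := if [pick k | y \in V m k] is Some k then vertex k (Jc (ordS k) J y) else y.
have sg_leg k y : y \in V m k -> sg y = vertex k (Jc (ordS k) J y).
  by move=> Vy; rewrite /sg (pick_V Vy).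
have sgE y : Jdef (sg y) = J y.
  case: (blockP y) => [->|k Vy].
    rewrite /sg pick_y0; apply: triple_ext => k.
    by have := Jdef_centre k; have := Jc_centre J_adm k; rewrite !JcE => -[-> _] [-> _].
  have Vv := vertex_in k (JS k y Vy).
  rewrite (sg_leg _ _ Vy) [RHS](mk3_coord3 k) /Jdef (pick_V Vv) label_vertex ?JS //.
  by rewrite JcE /= (coord_next J_adm Vy) rev_ordK.
have sg_inj : injective sg.
  by move=> y1 y2 E; apply: (admissible_inj J_adm); rewrite -!sgE E.
exists (perm sg_inj); split.
  move=> k; apply/eqP; rewrite eqEcard card_imset ?leqnn ?andbT; last exact: perm_inj.
  by apply/subsetP => _ /imsetP [y Vy ->]; rewrite permE (sg_leg _ _ Vy) vertex_in // JS.
by apply: functional_extensionality => y; rewrite permE sgE.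
Qed.

End FromValidSet.

Lemma J1V3_Z J : J1V3 J = Z J ord0.
Proof. by rewrite /J1V3 /Z (_ : inord 2 = ordS (ordS ord0)) //; apply/val_inj; rewrite /= inordK. Qed.

End Hypergraph.

Theorem proposition6p5 (m : nat) (m_gt1 : (1 < m)%N) (m_odd : odd m)
    (phi : 'I_m * 'I_m -> 'I_(m ^ 2))
    (phi_inj : {in Om m &, injective phi})
    (phi_ne1 : forall p, p \in Om m -> val (phi p) != 0%N)
    (rk : H m -> nat) (rk_inj : injective rk) :
  (forall J : labeling m, nonzeroJ phi rk J -> valid (J1V3 J)) /\
  (forall S : {set 'I_m * 'I_m}, valid S ->
     exists J : labeling m,
       [/\ nonzeroJ phi rk J, J1V3 J = S &
           forall J' : labeling m, nonzeroJ phi rk J' -> J1V3 J' = S ->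
             exists sigma : {perm H m},
               (forall k : 'I_3, sigma @: V m k = V m k) /\
               J' = (fun y => J (sigma y))]).
Proof.
have nonzero_adm := nonzero_admissible m_gt1 m_odd phi_inj phi_ne1 rk.
split=> [J /nonzero_adm J_adm | S S_valid].
  by rewrite J1V3_Z; apply: Z_valid.
exists (Jdef m_gt1 m_odd S); split.
- exact/nonzero_adm/Jdef_admissible.
- by rewrite J1V3_Z Z_Jdef.
- by move=> J' /nonzero_adm J'_adm; rewrite J1V3_Z; apply: Jdef_unique.
Qed.
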